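(* Let $n \ge 3$, let $x_1, \dots, x_n \in \mathbb{R}$ be pairwise distinct, let $h(\theta) = \prod_{j=1}^n (x_j-\theta)$ and $q(\theta) = \theta - n\,h(\theta)/h'(\theta)$. Then $q$ maps the upper half-plane $\{\Im\theta>0\}$ into the lower half-plane $\{\Im\theta<0\}$, and maps the lower half-plane into the upper half-plane. *)

From HB Require Import structures.
From mathcomp Require Import all_boot all_order all_algebra.
From mathcomp Require Import complex.
Set Implicit Arguments. Unset Strict Implicit. Unset Printing Implicit Defensive.
Import Order.TTheory GRing.Theory Num.Theory.
Local Open Scope ring_scope.

Definition hpoly (R : rcfType) (n : nat) (x : 'I_n -> R) : {poly R[i]} :=
  \prod_(j < n) ((x j)%:C%C%:P - 'X).

Definition qmap (R : rcfType) (n : nat) (x : 'I_n -> R) (t : R[i]) : R[i] :=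
  t - n%:R * (hpoly x).[t] / (hpoly x)^`().[t].

From HB Require Import structures.
From mathcomp Require Import all_boot all_order all_algebra.
From mathcomp Require Import complex.
From mathcomp Require Import ring.
Set Implicit Arguments. Unset Strict Implicit. Unset Printing Implicit Defensive.
Import Order.TTheory GRing.Theory Num.Theory.
Local Open Scope ring_scope.

(** Off the real axis the logarithmic derivative of h is
    h'/h = - U with U = \sum_j w_j and w_j = 1/(x_j - t), so q(t) = t + n/U.
    Since Im w_j = Im t |w_j|^2, we get Im U = Im t S with S = \sum_j |w_j|^2,
    and Im q(t) = Im t (|U|^2 - n S) / |U|^2.  Strict Cauchy-Schwarz gives
    |U|^2 < n S as soon as two of the w_j differ, i.e. as soon as n >= 2, so
    Im q(t) has the sign opposite to Im t. *)

Lemma horner_deriv_prod_subX (F : fieldType) (I : Type) (r : seq I)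
    (c : I -> F) (t : F) :
  all (fun j => c j != t) r ->
  (\prod_(j <- r) ((c j)%:P - 'X))^`().[t] =
  - (\prod_(j <- r) ((c j)%:P - 'X)).[t] * \sum_(j <- r) (c j - t)^-1.
Proof.
elim: r => [|a r IHr] /=; first by rewrite !big_nil derivC horner0 mulr0.
case/andP=> ca_neq_t /IHr {}IHr.
rewrite !big_cons derivM !hornerD !hornerM IHr derivB derivC derivX !hornerE.
have ca_sub_t_neq0 : c a - t != 0 by rewrite subr_eq0.
by rewrite /=; field.
Qed.

Lemma sum_sqr_centered (R : comPzRingType) (m : nat) (p : 'I_m -> R) :
  \sum_k (m%:R * p k - \sum_l p l) ^+ 2 =
  m%:R * (m%:R * \sum_k p k ^+ 2 - (\sum_k p k) ^+ 2).
Proof.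
set P := \sum_l p l.
rewrite (eq_bigr (fun k => m%:R ^+ 2 * p k ^+ 2 - 2 * m%:R * P * p k + P ^+ 2));
  last by move=> k _; ring.
rewrite big_split sumrB /= -!mulr_sumr sumr_const card_ord -/P -mulr_natl.
ring.
Qed.

Section SquaredModulus.
Variable R : rcfType.
Implicit Types (z : R[i]) (c : R).

Definition sqnormc z : R := complex.Re z ^+ 2 + complex.Im z ^+ 2.

Lemma sqnormc_ge0 z : 0 <= sqnormc z.
Proof. by rewrite addr_ge0 ?sqr_ge0. Qed.

Lemma sqnormc_eq0 z : (sqnormc z == 0) = (z == 0).
Proof.
case: z => a b; rewrite /sqnormc paddr_eq0 ?sqr_ge0 //= !sqrf_eq0.
by rewrite eq_complex.
Qed.

Lemma sqnormc_gt0 z : (0 < sqnormc z) = (z != 0).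
Proof. by rewrite lt0r sqnormc_eq0 sqnormc_ge0 andbT. Qed.

Lemma Im_inv z : complex.Im z^-1 = - complex.Im z / sqnormc z.
Proof. by case: z => a b /=; rewrite mulNr. Qed.

Lemma sqnormcV z : sqnormc z^-1 = (sqnormc z)^-1.
Proof.
case: z => a b; rewrite /sqnormc /=.
have [n0|n_neq0] := eqVneq (a ^+ 2 + b ^+ 2) 0.
  by rewrite n0 invr0 !mulr0 oppr0 expr0n /= addr0.
by rewrite /=; field.
Qed.

Lemma Im_inv_subC c z :
  complex.Im (c%:C%C - z)^-1 = complex.Im z * sqnormc (c%:C%C - z)^-1.
Proof. by rewrite Im_inv sqnormcV raddfB /= sub0r opprK. Qed.

Lemma subC_neq0 c z : complex.Im z != 0 -> c%:C%C - z != 0.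
Proof. by apply: contraNneq => /subr0_eq <-. Qed.

Lemma sqnormc_sum_lt (m : nat) (w : 'I_m -> R[i]) (i j : 'I_m) :
  w i != w j -> sqnormc (\sum_k w k) < m%:R * \sum_k sqnormc (w k).
Proof.
move=> wi_neq_wj.
have m_pos : (0 < m)%N by rewrite (leq_ltn_trans _ (ltn_ord i)).
have m_gt0 : (0 : R) < m%:R by rewrite ltr0n.
have m_neq0 : (m%:R : R[i]) != 0 by rewrite pnatr_eq0 -lt0n.
set W := \sum_k w k.
have centered : \sum_k sqnormc (m%:R * w k - W) =
    m%:R * (m%:R * \sum_k sqnormc (w k) - sqnormc W).
  have sqnormc_centered k : sqnormc (m%:R * w k - W) =
      (m%:R * complex.Re (w k) - \sum_l complex.Re (w l)) ^+ 2 +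
      (m%:R * complex.Im (w k) - \sum_l complex.Im (w l)) ^+ 2.
    by rewrite /sqnormc /W !mulr_natl !raddfB !raddfMn !raddf_sum.
  rewrite (eq_bigr _ (fun k _ => sqnormc_centered k)) big_split /=.
  rewrite !sum_sqr_centered /sqnormc big_split /W !raddf_sum /=.
  ring.
rewrite -subr_gt0 -(pmulr_rgt0 _ m_gt0) -centered lt0r.
rewrite sumr_ge0 ?andbT; last by move=> k _; exact: sqnormc_ge0.
rewrite psumr_neq0; last by move=> k _; exact: sqnormc_ge0.
apply/hasP; have [wi_eq|wi_neq] := eqVneq (m%:R * w i) W.
  exists j; rewrite ?mem_index_enum //= sqnormc_gt0 subr_eq0 -wi_eq.
  by rewrite (inj_eq (mulfI m_neq0)) eq_sym.
by exists i; rewrite ?mem_index_enum //= sqnormc_gt0 subr_eq0.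
Qed.

End SquaredModulus.

Section QMap.
Variables (R : rcfType) (n : nat) (x : 'I_n -> R).

Lemma qmapE (t : R[i]) : complex.Im t != 0 ->
  qmap x t = t + n%:R / \sum_j ((x j)%:C%C - t)^-1.
Proof.
move=> Im_t_neq0.
have x_sub_t_neq0 j : (x j)%:C%C - t != 0 by exact: subC_neq0.
have h_t : (hpoly x).[t] = \prod_j ((x j)%:C%C - t).
  by rewrite /hpoly horner_prod; apply: eq_bigr => j _; rewrite !hornerE.
have h_t_neq0 : (hpoly x).[t] != 0.
  by rewrite h_t prodf_seq_neq0; apply/allP => j _ /=.
rewrite /qmap {2}/hpoly horner_deriv_prod_subX; last first.
  by apply/allP => j _; rewrite -subr_eq0.
by rewrite -/(hpoly x) invfM invrN mulNr mulrN mulrA mulfK // opprK.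
Qed.

Hypotheses (n_gt1 : (1 < n)%N) (x_inj : injective x).

Lemma Im_qmap_mul_lt0 (t : R[i]) :
  complex.Im t != 0 -> complex.Im t * complex.Im (qmap x t) < 0.
Proof.
move=> Im_t_neq0; set b := complex.Im t in Im_t_neq0 *.
set w := fun j => ((x j)%:C%C - t)^-1.
set U := \sum_j w j; set S := \sum_j sqnormc (w j).
have w_inj : injective w by move=> j k /invr_inj/addIr/complexI/x_inj.
have ImU : complex.Im U = b * S.
  by rewrite raddf_sum mulr_sumr; apply: eq_bigr => j _; exact: Im_inv_subC.
have U_lt_nS : sqnormc U < n%:R * S.
  by apply: (sqnormc_sum_lt (i := Ordinal (ltnW n_gt1)) (j := Ordinal n_gt1));
    rewrite (inj_eq w_inj).
have S_gt0 : 0 < S.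
  have n_gt0 : (0 : R) < n%:R by rewrite ltr0n ltnW.
  by rewrite -(pmulr_rgt0 _ n_gt0) (le_lt_trans (sqnormc_ge0 U)).
have U_gt0 : 0 < sqnormc U.
  rewrite sqnormc_gt0; apply: contra_neq Im_t_neq0 => U0.
  by apply: (mulIf (lt0r_neq0 S_gt0)); rewrite mul0r -ImU U0.
have Im_q : complex.Im (qmap x t) = b - n%:R * (b * S) / sqnormc U.
  rewrite (qmapE Im_t_neq0 : qmap x t = t + n%:R / U) raddfD mulr_natl raddfMn /=.
  by rewrite Im_inv ImU -[_ *+ n]mulr_natl; ring.
have -> : b * complex.Im (qmap x t) = b ^+ 2 * ((sqnormc U - n%:R * S) / sqnormc U).
  by rewrite Im_q; field; rewrite lt0r_neq0.
by rewrite pmulr_rlt0 ?exprn_even_gt0 // pmulr_llt0 ?invr_gt0 // subr_lt0.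
Qed.

End QMap.

Theorem mainTheorem8 (R : rcfType) (n : nat) (x : 'I_n -> R) :
  (3 <= n)%N -> injective x ->
  (forall t : R[i], 0 < complex.Im t -> complex.Im (qmap x t) < 0) /\
  (forall t : R[i], complex.Im t < 0 -> 0 < complex.Im (qmap x t)).
Proof.
move=> n_ge3 x_inj; have n_gt1 : (1 < n)%N by apply: leq_trans n_ge3.
split=> t Im_t.
- by rewrite -(pmulr_rlt0 _ Im_t) Im_qmap_mul_lt0 // lt0r_neq0.
- by rewrite -(nmulr_rlt0 _ Im_t) Im_qmap_mul_lt0 // ltr0_neq0.
Qed.
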